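(* Let $\mathcal{H}^1_{\mathrm{TT}}=(C,F^1,D,G)$ be a two-timescale system satisfying the Hybrid Basic Conditions, and let $(\Phi,\{H_k\}_{k=1}^\infty)$, with $H_k=(h_{s,k},h_{f,k})$, be a two-timescale asymptotic simulation of $\mathcal{H}^1_{\mathrm{TT}}$. Then $(\Phi,\{h_{f,k}\}_{k=1}^\infty)$ is an asymptotic simulation of the boundary layer system $\mathcal{H}_{\mathrm{BL}}=(C,\widetilde F,D,G)$, where $\widetilde F(x):=\{0\}\times F_f(x)$.
   Context: Hybrid inclusions. A hybrid inclusion $\mathcal H=(C,F,D,G)$ on $\mathbb R^n$ consists of sets $C,D\subset\mathbb R^n$ and set-valued maps $F,G:\mathbb R^n\rightrightarrows\mathbb R^n$, representing the dynamics $x\in C,\ \dot x\in F(x)$ and $x\in D,\ x^+\in G(x)$. $\mathcal H$ satisfies the Hybrid Basic Conditions if $C,D$ are closed; $F,G$ are outer semicontinuous and locally bounded; $F(x)$ is nonempty and convex for every $x\in C$; $G(x)$ is nonempty for every $x\in D$. Define $F_C(x):=F(x)$ if $x\in C$ and $F_C(x):=\emptyset$ otherwise, and $G_D(x):=G(x)$ if $x\in D$ and $\emptyset$ otherwise; thus $\mathrm{gph}(F_C)=\mathrm{gph}(F)\cap(C\times\mathbb R^n)$ and $\mathrm{gph}(G_D)=\mathrm{gph}(G)\cap(D\times\mathbb R^n)$. Hybrid sequences. A compact hybrid sequence domain is a set $E=\bigcup_{j=0}^{J-1}(\{k_j,\dots,k_{j+1}\}\times\{j\})\subset\mathbb Z_{\ge0}^2$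 with $J\in\mathbb N$ and integers $0=k_0\le k_1\le\dots\le k_J$; a hybrid sequence domain is the union of a nondecreasing sequence of compact hybrid sequence domains; a hybrid sequence is a map $\phi$ whose domain $\mathrm{dom}\,\phi$ is a hybrid sequence domain. It is complete if its domain is unbounded, complete in the $k$-direction if the set of $k$'s occurring in its domain is unbounded, and complete in the $j$-direction if the set of $j$'s occurring is unbounded. Set $\bar\jmath_k:=\inf\{j\in\mathbb Z_{\ge0}:(k+1,j)\in\mathrm{dom}\,\phi\}$ and $\bar k_j:=\inf\{k\in\mathbb Z_{\ge0}:(k,j+1)\in\mathrm{dom}\,\phi\}$ ($\inf\emptyset=\infty$). The $\limsup$ of a sequence of points denotes its outer limit, i.e. the set of all its accumulation points. Asymptotic simulations. A sequence $\{h_k\}_{k=1}^\infty$ is admissible if $h_k>0$ for all $k$, $h_k\to0$, and $\sum_k h_k=\infty$; set $\tau_k:=\sum_{i=0}^{k-1}h_{i+1}$ ($k\in\mathbb Z_{\ge0}$) and $m(t):=\max\{k\in\mathbb Z_{\ge0}:\tau_k\le t\}$. A pair $(\phi,\{h_k\})$ is an asymptotic simulation of $\mathcal H=(C,F,D,G)$ if $\phi$ is a bounded complete hybrid sequence in $\mathbb R^n$, $\{h_k\}$ is admissible, and: (1) if $\phi$ is complete in the $k$-direction, there is a bounded sequence $\{f_k\}_{k=0}^\infty\subset\mathbb R^n$ with $\limsup_{k\to\infty}(\phi(k,\bar\jmath_k),f_k)\subset\mathrm{gph}(F_C)$ and, with $\hat f_{k+1}:=(\phi(k+1,\bar\jmath_k)-\phi(k,\bar\jmath_k))/h_{k+1}$,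 for every $T>0$: $\lim_{n\to\infty}\sup_{n+1\le k\le m(\tau_n+T)}\big|\sum_{i=n}^{k-1}h_{i+1}(\hat f_{i+1}-f_i)\big|=0$; (2) if $\phi$ is complete in the $j$-direction, $\limsup_{j\to\infty}(\phi(\bar k_j,j),\phi(\bar k_j,j+1))\subset\mathrm{gph}(G_D)$. Two-timescale setting. Let $n=n_s+n_f$ and write $x=(x_s,x_f)\in\mathbb R^{n_s}\times\mathbb R^{n_f}$. The two-timescale system $\mathcal H^1_{\mathrm{TT}}=(C,F^1,D,G)$ has $C,D\subset\mathbb R^n$, $F_s:\mathbb R^n\rightrightarrows\mathbb R^{n_s}$, $F_f:\mathbb R^n\rightrightarrows\mathbb R^{n_f}$, $F^1(x):=F_s(x_s,x_f)\times F_f(x_s,x_f)$, and $G:\mathbb R^n\rightrightarrows\mathbb R^n$. A sequence $\{H_k\}_{k=1}^\infty$, $H_k=(h_{s,k},h_{f,k})\in\mathbb R^2_{>0}$, is two-timescale admissible if $\{h_{s,k}\}$ and $\{h_{f,k}\}$ are each admissible and $\lim_{k\to\infty}h_{s,k}/h_{f,k}=0$. For $r\in\{s,f\}$ set $\tau_{r,k}:=\sum_{i=0}^{k-1}h_{r,i+1}$, $m_r(t):=\max\{k\in\mathbb Z_{\ge0}:\tau_{r,k}\le t\}$, and $\mathcal I_{r,n,T}:=\{k\in\mathbb Z_{\ge0}:n+1\le k\le m_r(\tau_{r,n}+T)\}$. A pair $(\Phi,\{H_k\})$ is a two-timescale asymptotic simulation of $\mathcal H^1_{\mathrm{TT}}$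 if $\Phi=(\phi_s,\phi_f)$ is a bounded complete hybrid sequence in $\mathbb R^n$, $\{H_k\}$ is two-timescale admissible, and: (1) if $\Phi$ is complete in the $k$-direction, there is a bounded sequence $f_k=(f_{s,k},f_{f,k})\in\mathbb R^{n_s}\times\mathbb R^{n_f}$, $k\ge0$, with $\limsup_{k\to\infty}(\Phi(k,\bar\jmath_k),f_k)\subset\mathrm{gph}(F^1_C)$ and, with $\hat f_{r,k+1}:=(\phi_r(k+1,\bar\jmath_k)-\phi_r(k,\bar\jmath_k))/h_{r,k+1}$, for every $T>0$ and each $r\in\{s,f\}$: $\lim_{n\to\infty}\sup_{k\in\mathcal I_{r,n,T}}\big|\sum_{i=n}^{k-1}h_{r,i+1}(\hat f_{r,i+1}-f_{r,i})\big|=0$; (2) if $\Phi$ is complete in the $j$-direction, $\limsup_{j\to\infty}(\Phi(\bar k_j,j),\Phi(\bar k_j,j+1))\subset\mathrm{gph}(G_D)$. *)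

From HB Require Import structures.
From mathcomp Require Import all_boot all_order all_algebra.
From mathcomp Require Import all_classical all_reals all_analysis.
Set Implicit Arguments. Unset Strict Implicit. Unset Printing Implicit Defensive.
Import Order.TTheory GRing.Theory Num.Theory.
Import numFieldNormedType.Exports.
Local Open Scope classical_set_scope.
Local Open Scope ring_scope.

Section Defs.
Variable R : realType.

Definition osc {U V : normedModType R} (F : U -> set V) : Prop :=
  forall (x : U) (y : V) (xs : nat -> U) (ys : nat -> V),
    xs @ \oo --> x -> ys @ \oo --> y -> (forall i, F (xs i) (ys i)) -> F x y.

Definition locally_bounded {U V : normedModType R} (F : U -> set V) : Prop :=
  forall x : U, exists2 W, nbhs x W &
    exists M : R, forall z y, W z -> F z y -> `|y| <= M.

Definition convex_set {V : normedModType R} (A : set V) : Prop :=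
  forall a b (t : R), A a -> A b -> 0 <= t <= 1 -> A (t *: a + (1 - t) *: b).

Definition hybrid_basic_conditions {V : normedModType R}
  (C : set V) (F : V -> set V) (D : set V) (G : V -> set V) : Prop :=
  [/\ closed C /\ closed D,
      osc F /\ locally_bounded F,
      osc G /\ locally_bounded G,
      (forall x, C x -> F x !=set0 /\ convex_set (F x)) &
      (forall x, D x -> G x !=set0)].

Definition compact_hsd (E : set (nat * nat)) : Prop :=
  exists (J : nat) (kk : nat -> nat),
    [/\ (0 < J)%N, kk 0%N = 0%N,
        (forall j, (j < J)%N -> (kk j <= kk j.+1)%N) &
        E = [set p | (p.2 < J)%N /\ (kk p.2 <= p.1 <= kk p.2.+1)%N]].

Definition hybrid_seq_domain (E : set (nat * nat)) : Prop :=
  exists Es : nat -> set (nat * nat),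
    [/\ (forall i, compact_hsd (Es i)),
        (forall i, Es i `<=` Es i.+1) &
        E = \bigcup_i Es i].

Definition bounded_hseq {V : normedModType R} (E : set (nat * nat))
  (phi : nat * nat -> V) : Prop :=
  exists M : R, forall p, E p -> `|phi p| <= M.

Definition complete_dom (E : set (nat * nat)) : Prop :=
  forall N, exists p, E p /\ (N <= p.1 + p.2)%N.
Definition k_complete (E : set (nat * nat)) : Prop :=
  forall N, exists k j, E (k, j) /\ (N <= k)%N.
Definition j_complete (E : set (nat * nat)) : Prop :=
  forall N, exists k j, E (k, j) /\ (N <= j)%N.

(* jbar_k := least j with (k+1, j) in dom; kbar_j := least k with (k, j+1)
   in dom (default 0 if none; only used when these exist). *)
Definition jbar (E : set (nat * nat)) (k : nat) : nat :=
  xget 0%N [set j | E (k.+1, j) /\ forall j', E (k.+1, j') -> (j <= j')%N].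
Definition kbar (E : set (nat * nat)) (j : nat) : nat :=
  xget 0%N [set k | E (k, j.+1) /\ forall k', E (k', j.+1) -> (k <= k')%N].

Definition outer_limit {T : pseudoMetricType R} (u : nat -> T) : set T :=
  [set y | forall e : R, 0 < e -> forall N, exists2 k, (N <= k)%N & ball y e (u k)].

Definition gph_restr {V : normedModType R} (C : set V) (F : V -> set V)
  : set (V * V) := [set z | C z.1 /\ F z.1 z.2].

(* sequences h are indexed from 1: h 0 is irrelevant *)
Definition admissible (h : nat -> R) : Prop :=
  [/\ (forall k, (0 < k)%N -> 0 < h k),
      h @ \oo --> 0 &
      (fun n => \sum_(1 <= k < n.+1) h k) @ \oo --> +oo].

Definition tau (h : nat -> R) (k : nat) : R := \sum_(0 <= i < k) h i.+1.

Definition mtime (h : nat -> R) (t : R) : nat :=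
  xget 0%N [set k | tau h k <= t /\ forall k', tau h k' <= t -> (k' <= k)%N].

Definition tracking_cond {W : normedModType R} (h : nat -> R)
  (fhat : nat -> W) (f : nat -> W) : Prop :=
  forall T : R, 0 < T ->
  forall e : R, 0 < e -> exists N, forall n, (N <= n)%N ->
    forall k, (n.+1 <= k)%N -> (k <= mtime h (tau h n + T))%N ->
      `|\sum_(n <= i < k) h i.+1 *: (fhat i.+1 - f i)| <= e.

Definition bounded_seq {W : normedModType R} (f : nat -> W) : Prop :=
  exists M : R, forall k, `|f k| <= M.

Definition asymptotic_simulation {V : normedModType R}
  (C : set V) (F : V -> set V) (D : set V) (G : V -> set V)
  (E : set (nat * nat)) (phi : nat * nat -> V) (h : nat -> R) : Prop :=
  [/\ hybrid_seq_domain E /\ bounded_hseq E phi, complete_dom E, admissible h,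
      (k_complete E ->
        exists f : nat -> V,
          [/\ bounded_seq f,
              outer_limit (fun k => (phi (k, jbar E k), f k)) `<=` gph_restr C F &
              tracking_cond h
                (fun k => (h k)^-1 *: (phi (k, jbar E k.-1) - phi (k.-1, jbar E k.-1)))
                f]) &
      (j_complete E ->
        outer_limit (fun j => (phi (kbar E j, j), phi (kbar E j, j.+1)))
          `<=` gph_restr D G)].

Definition tt_admissible (hs hf : nat -> R) : Prop :=
  [/\ admissible hs, admissible hf & (fun k => hs k / hf k) @ \oo --> 0].

Definition F1 {ns nf : nat} (Fs : 'rV[R]_ns * 'rV[R]_nf -> set 'rV[R]_ns)
  (Ff : 'rV[R]_ns * 'rV[R]_nf -> set 'rV[R]_nf)
  : 'rV[R]_ns * 'rV[R]_nf -> set ('rV[R]_ns * 'rV[R]_nf) :=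
  fun x => [set v | Fs x v.1 /\ Ff x v.2].

Definition F_BL {ns nf : nat} (Ff : 'rV[R]_ns * 'rV[R]_nf -> set 'rV[R]_nf)
  : 'rV[R]_ns * 'rV[R]_nf -> set ('rV[R]_ns * 'rV[R]_nf) :=
  fun x => [set v | v.1 = 0 /\ Ff x v.2].

Definition tt_asymptotic_simulation {ns nf : nat}
  (C : set ('rV[R]_ns * 'rV[R]_nf))
  (Fs : 'rV[R]_ns * 'rV[R]_nf -> set 'rV[R]_ns)
  (Ff : 'rV[R]_ns * 'rV[R]_nf -> set 'rV[R]_nf)
  (D : set ('rV[R]_ns * 'rV[R]_nf))
  (G : 'rV[R]_ns * 'rV[R]_nf -> set ('rV[R]_ns * 'rV[R]_nf))
  (E : set (nat * nat)) (Phi : nat * nat -> 'rV[R]_ns * 'rV[R]_nf)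
  (hs hf : nat -> R) : Prop :=
  [/\ hybrid_seq_domain E /\ bounded_hseq E Phi, complete_dom E, tt_admissible hs hf,
      (k_complete E ->
        exists f : nat -> 'rV[R]_ns * 'rV[R]_nf,
          [/\ bounded_seq f,
              outer_limit (fun k => (Phi (k, jbar E k), f k))
                `<=` gph_restr C (F1 Fs Ff),
              tracking_cond hs
                (fun k => (hs k)^-1 *:
                   ((Phi (k, jbar E k.-1)).1 - (Phi (k.-1, jbar E k.-1)).1))
                (fun k => (f k).1) &
              tracking_cond hf
                (fun k => (hf k)^-1 *:
                   ((Phi (k, jbar E k.-1)).2 - (Phi (k.-1, jbar E k.-1)).2))
                (fun k => (f k).2)]) &
      (j_complete E ->
        outer_limit (fun j => (Phi (kbar E j, j), Phi (kbar E j, j.+1)))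
          `<=` gph_restr D G)].

End Defs.

(* The fast component of the boundary layer simulation is literally the fast
   component of the two-timescale one.  For the slow component one takes the
   velocity estimate 0: a window of fast time T carries only o(1) slow time,
   because hs/hf -> 0, so the slow tracking estimate over one unit of slow time
   shows that the slow increments sum to o(1) over it.  Accumulation points of
   (Phi, (0, f_f)) lift to accumulation points of (Phi, (f_s, f_f)) by
   compactness of bounded sets of slow velocities, which puts the fast velocity
   in F_f. *)

From HB Require Import structures.
From mathcomp Require Import all_boot all_order all_algebra.
From mathcomp Require Import all_classical all_reals all_analysis.
Import Order.TTheory GRing.Theory Num.Theory.
Import numFieldNormedType.Exports.
Local Open Scope classical_set_scope.
Local Open Scope ring_scope.

Section step_sizes.
Set Implicit Arguments. Unset Strict Implicit.
Variable R : realType.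
Implicit Types (h : nat -> R) (n k : nat).

Lemma step_gt0 h k : admissible h -> 0 < h k.+1.
Proof. by case=> hpos _ _; exact: hpos. Qed.

Lemma step_neq0 h k : admissible h -> h k.+1 != 0.
Proof. by move/(step_gt0 k); rewrite lt0r => /andP[]. Qed.

Lemma window_sum_ge0 h n k : admissible h -> 0 <= \sum_(n <= i < k) h i.+1.
Proof. by move=> hA; apply: sumr_ge0 => i _; exact/ltW/step_gt0. Qed.

Lemma tauD h n k : (n <= k)%N -> tau h k = tau h n + \sum_(n <= i < k) h i.+1.
Proof. by move=> nk; rewrite /tau (big_cat_nat (leq0n n) nk). Qed.

Lemma tau_ge0 h n : admissible h -> 0 <= tau h n.
Proof. exact: window_sum_ge0. Qed.

Lemma tau_le h n k : admissible h -> (n <= k)%N -> tau h n <= tau h k.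
Proof. by move=> hA nk; rewrite (tauD h nk) lerDl window_sum_ge0. Qed.

(* The maximum exists because [tau h] diverges; for [t < 0] [mtime h t] is the junk value 0. *)
Lemma mtimeP h t : admissible h -> 0 <= t ->
  tau h (mtime h t) <= t /\ forall k, tau h k <= t -> (k <= mtime h t)%N.
Proof.
move=> hA t0; have [_ _ tau_oo] := hA.
have [N _ tauN] : \forall n \near \oo, t + 1 <= \sum_(1 <= k < n.+1) h k.
  by move/cvgryPge : tau_oo; apply.
have ub k : `[< tau h k <= t >] -> (k <= N)%N.
  move=> /asboolP tk; rewrite leqNgt; apply/negP => Nk.
  have := tauN k (ltnW Nk); rewrite /= big_add1 /= -/(tau h k) => tk1.
  by have := le_trans tk1 tk; rewrite gerDl ler10.
have ex0 : exists k, `[< tau h k <= t >].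
  by exists 0%N; apply/asboolP; rewrite /tau big_geq.
have [k /asboolP tk kmax] := ex_maxnP ex0 ub.
have mk : [set k | tau h k <= t /\ forall k', tau h k' <= t -> (k' <= k)%N] k.
  by split => // k' tk'; apply: kmax; apply/asboolP.
by have := xgetPex 0%N (ex_intro _ _ mk); rewrite -/(mtime h t).
Qed.

Lemma leq_mtime_window h n k T : admissible h -> 0 <= T -> (n <= k)%N ->
  (k <= mtime h (tau h n + T))%N = (\sum_(n <= i < k) h i.+1 <= T).
Proof.
move=> hA T0 nk; have [tau_m max_m] := mtimeP hA (addr_ge0 (tau_ge0 n hA) T0).
apply/idP/idP => [km | sT].
- by rewrite -(lerD2l (tau h n)) -tauD //; exact: le_trans (tau_le hA km) tau_m.
- by apply: max_m; rewrite (tauD h nk) lerD2l.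
Qed.

Lemma slow_window_le (hs hf : nat -> R) d : tt_admissible hs hf -> 0 < d ->
  exists N, forall n k, (N <= n)%N ->
    \sum_(n <= i < k) hs i.+1 <= d * \sum_(n <= i < k) hf i.+1.
Proof.
move=> [hsA hfA ratio0] d0; have [N _ ratioN] := cvgr0_norm_lt _ ratio0 _ d0.
exists N => n k Nn; rewrite mulr_sumr; apply: ler_sum_nat => i /andP[ni _].
have := ratioN i.+1 (leq_trans Nn (leq_trans ni (leqnSn i))).
have hsi := step_gt0 i hsA; have hfi := step_gt0 i hfA.
rewrite /= ger0_norm; last by rewrite divr_ge0 // ltW.
by rewrite ltr_pdivrMr // mulrC => /ltW.
Qed.

End step_sizes.

Lemma sumr_pair (U V : zmodType) (I : Type) (r : seq I) (P : pred I)
    (F : I -> U * V) :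
  \sum_(i <- r | P i) F i =
  (\sum_(i <- r | P i) (F i).1, \sum_(i <- r | P i) (F i).2).
Proof.
apply: (big_rec3 (fun a b c => a = (b, c))) => // i a b c _ ->.
by case: (F i).
Qed.

Section tracking.
Set Implicit Arguments. Unset Strict Implicit.
Variable R : realType.
Implicit Types (h : nat -> R) (n k : nat).

Lemma bounded_seq_fst (U V : normedModType R) (f : nat -> U * V) :
  bounded_seq f -> bounded_seq (fun k => (f k).1).
Proof.
by case=> M fM; exists M => k; apply: le_trans (fM k); rewrite prod_normE le_max lexx.
Qed.

Lemma bounded_seq_snd (U V : normedModType R) (f : nat -> U * V) :
  bounded_seq f -> bounded_seq (fun k => (f k).2).
Proof.
case=> M fM; exists M => k; apply: le_trans (fM k).
by rewrite prod_normE le_max lexx orbT.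
Qed.

Lemma bounded_seq_pair (U V : normedModType R) (a : nat -> U) (b : nat -> V) :
  bounded_seq a -> bounded_seq b -> bounded_seq (fun k => (a k, b k)).
Proof.
case=> Ma aM [Mb bM]; exists (Num.max Ma Mb) => k.
by rewrite prod_normE ge_max !le_max aM bM orbT.
Qed.

Lemma norm_window_sum_le (W : normedModType R) h (f : nat -> W) M n k :
  admissible h -> (forall k, `|f k| <= M) ->
  `|\sum_(n <= i < k) h i.+1 *: f i| <= M * \sum_(n <= i < k) h i.+1.
Proof.
move=> hA fM; rewrite mulr_sumr; apply: le_trans (ler_norm_sum _ _ _) _.
apply: ler_sum_nat => i _; have hi := ltW (step_gt0 i hA).
by rewrite normrZ ger0_norm // mulrC; exact: ler_wpM2r.
Qed.

Lemma scaled_step_sumE (W : normedModType R) h (u f : nat -> W) n k :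
  admissible h ->
  \sum_(n <= i < k) h i.+1 *: ((h i.+1)^-1 *: u i.+1 - f i) =
  \sum_(n <= i < k) u i.+1 - \sum_(n <= i < k) h i.+1 *: f i.
Proof.
move=> hA; rewrite -sumrB; apply: eq_bigr => i _.
by rewrite scalerBr scalerKV // step_neq0.
Qed.

Lemma tracking_cond_pair (U V : normedModType R) h (fhat f : nat -> U * V) :
  tracking_cond h (fun k => (fhat k).1) (fun k => (f k).1) ->
  tracking_cond h (fun k => (fhat k).2) (fun k => (f k).2) ->
  tracking_cond h fhat f.
Proof.
move=> tr1 tr2 T T0 e e0.
have [N1 trN1] := tr1 T T0 e e0; have [N2 trN2] := tr2 T T0 e e0.
exists (maxn N1 N2) => n; rewrite geq_max => /andP[N1n N2n] k nk km.
rewrite sumr_pair prod_normE ge_max.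
by apply/andP; split; [exact: trN1 | exact: trN2].
Qed.

Lemma tracking_cond_slow (W : normedModType R) (hs hf : nat -> R) (u f : nat -> W) :
  tt_admissible hs hf -> bounded_seq f ->
  tracking_cond hs (fun k => (hs k)^-1 *: u k) f ->
  tracking_cond hf (fun k => (hf k)^-1 *: u k) (fun=> 0).
Proof.
move=> hA [M fM] trs T T0 e e0; have [hsA hfA _] := hA.
have M0 : 0 <= M := le_trans (normr_ge0 _) (fM 0%N).
have M1 : 0 < M + 1 by rewrite ltr_wpDl.
have e2 : 0 < e / 2 by rewrite divr_gt0.
pose s := Num.min 1 (e / 2 / (M + 1)).
have s0 : 0 < s by rewrite lt_min ltr01 divr_gt0.
have [Ns trNs] := trs 1 ltr01 (e / 2) e2.
have [Nr ratioN] := slow_window_le hA (divr_gt0 s0 T0).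
exists (maxn Ns Nr) => n; rewrite geq_max => /andP[Nsn Nrn] k nk km.
have nk' := ltnW nk.
have slow_s : \sum_(n <= i < k) hs i.+1 <= s.
  rewrite (leq_mtime_window hfA (ltW T0) nk') in km.
  apply: le_trans (ratioN n k Nrn) _.
  rewrite -{2}[s](mulfVK (lt0r_neq0 T0)).
  by apply: ler_wpM2l km; exact/ltW/divr_gt0.
have slow_window : (k <= mtime hs (tau hs n + 1))%N.
  by rewrite leq_mtime_window // ?ler01 // (le_trans slow_s) // ge_min lexx.
have := trNs n Nsn k nk slow_window; rewrite scaled_step_sumE // => slow_close.
rewrite scaled_step_sumE // [X in _ - X]big1 => [|i _]; last exact: scaler0.
rewrite subr0 -(subrK (\sum_(n <= i < k) hs i.+1 *: f i) (\sum_(n <= i < k) u i.+1)).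
rewrite [leRHS]splitr; apply: le_trans (ler_normD _ _) _; apply: lerD slow_close _.
apply: le_trans (norm_window_sum_le _ _ hsA fM) _.
apply: le_trans (ler_wpM2l M0 slow_s) _.
apply: le_trans (ler_wpM2r (ltW s0) (ler_wpDr ler01 (lexx M))) _.
rewrite -(mulfVK (lt0r_neq0 M1) (e / 2)) [leRHS]mulrC.
by rewrite ler_pM2l // ge_min lexx orbT.
Qed.

End tracking.

Section outer_limit.
Set Implicit Arguments. Unset Strict Implicit.
Variable R : realType.

Lemma outer_limit_nonexpansive (T U : pseudoMetricType R) (g : T -> U)
    (u : nat -> T) y :
  (forall a b e, ball a e b -> ball (g a) e (g b)) ->
  outer_limit u y -> outer_limit (fun k => g (u k)) (g y).
Proof.
move=> g_ball uy e e0 N; have [k Nk yk] := uy e e0 N.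
by exists k => //; exact: g_ball.
Qed.

Lemma outer_limit_cst (V : normedModType R) (c y : V) :
  outer_limit (fun=> c) y -> y = c.
Proof.
move=> cy; apply: (close_eq (@norm_hausdorff R V)); rewrite ball_close => e.
by have [k _] := cy _ (gt0 e) 0%N.
Qed.

Lemma bounded_rV_outer_limit n (b : nat -> 'rV[R]_n) :
  bounded_seq b -> exists w, outer_limit b w.
Proof.
case=> M bM; pose A := [set v : 'rV[R]_n | `|v| <= M].
have A_closed : closed A.
  have -> : A = closed_ball_ Num.Def.normr 0 M.
    by apply/seteqP; split => v; rewrite /A /closed_ball_ /= distrC subr0.
  exact: closed_closed_ball_.
have A_bounded : bounded_set A.
  exists M; split; first by rewrite num_real.
  by move=> M' ltM v Av /=; apply: le_trans Av (ltW ltM).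
have A_b : (b @ \oo) A by exists 0%N => // m _; exact: bM.
have [w [_ bw]] := bounded_closed_compact A_bounded A_closed _ A_b.
exists w => e e0 N.
pose X := [set y | exists2 m, (N <= m)%N & y = b m].
have X_b : (b @ \oo) X by exists N => // m /= Nm; exists m.
have [y [[m Nm ->] wy]] := bw X (ball w e) X_b (nbhsx_ballx w e e0).
by exists m.
Qed.

Lemma outer_limit_pair_rV (T : pseudoMetricType R) n (u : nat -> T)
    (b : nat -> 'rV[R]_n) y :
  bounded_seq b -> outer_limit u y ->
  exists w, outer_limit (fun k => (u k, b k)) (y, w).
Proof.
move=> bB uy.
have : forall m, exists k, (m <= k)%N /\ ball y m.+1%:R^-1 (u k).
  move=> m; have m0 : 0 < m.+1%:R^-1 :> R by rewrite invr_gt0.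
  by have [k mk yk] := uy _ m0 m; exists k.
case/choice => km km_spec.
have [w bw] : exists w, outer_limit (fun m => b (km m)) w.
  by apply: bounded_rV_outer_limit; case: bB => M bM; exists M.
exists w => e e0 N.
have [M0 _ M0e] := near_infty_natSinv_lt (PosNum e0).
have [m Nm wm] := bw e e0 (maxn N M0); have [km_m ym] := km_spec m.
exists (km m); first by apply: leq_trans km_m; apply: leq_trans Nm; exact: leq_maxl.
split => //; apply: le_ball ym; apply/ltW/M0e.
by apply: leq_trans Nm; exact: leq_maxr.
Qed.

Lemma outer_limit_BL ns nf (C : set ('rV[R]_ns * 'rV[R]_nf))
    (Fs : 'rV[R]_ns * 'rV[R]_nf -> set 'rV[R]_ns)
    (Ff : 'rV[R]_ns * 'rV[R]_nf -> set 'rV[R]_nf)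
    (p f : nat -> 'rV[R]_ns * 'rV[R]_nf) :
  bounded_seq f ->
  outer_limit (fun k => (p k, f k)) `<=` gph_restr C (F1 Fs Ff) ->
  outer_limit (fun k => (p k, (0, (f k).2))) `<=` gph_restr C (F_BL Ff).
Proof.
move=> fB olF [x [v1 v2]] ol0.
have v10 : v1 = 0.
  apply: outer_limit_cst.
  apply: (outer_limit_nonexpansive (g := fun z => z.2.1)) ol0.
  by move=> a b e [_ []].
have [w olw] := outer_limit_pair_rV (bounded_seq_fst fB)
  (outer_limit_nonexpansive (g := fun z => (z.1, z.2.2))
     (fun a b e '(conj pab (conj _ qab)) => conj pab qab) ol0).
have [Cx [_ Ffx]] := olF (x, (w, v2))
  (outer_limit_nonexpansive (g := fun z => (z.1.1, (z.2, z.1.2)))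
     (fun a b e '(conj (conj pab qab) wab) => conj pab (conj wab qab)) olw).
by split.
Qed.

End outer_limit.

Theorem theorem1 (R : realType) (ns nf : nat)
  (C : set ('rV[R]_ns * 'rV[R]_nf))
  (Fs : 'rV[R]_ns * 'rV[R]_nf -> set 'rV[R]_ns)
  (Ff : 'rV[R]_ns * 'rV[R]_nf -> set 'rV[R]_nf)
  (D : set ('rV[R]_ns * 'rV[R]_nf))
  (G : 'rV[R]_ns * 'rV[R]_nf -> set ('rV[R]_ns * 'rV[R]_nf))
  (E : set (nat * nat)) (Phi : nat * nat -> 'rV[R]_ns * 'rV[R]_nf)
  (hs hf : nat -> R) :
  hybrid_basic_conditions C (F1 Fs Ff) D G ->
  tt_asymptotic_simulation C Fs Ff D G E Phi hs hf ->
  asymptotic_simulation C (F_BL Ff) D G E Phi hf.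
Proof.
move=> _ [Hdom Hcomplete hA Hflow Hjump]; have [_ hfA _] := hA.
split => // k_compl; have [f [fB olF tr_slow tr_fast]] := Hflow k_compl.
exists (fun k => (0, (f k).2)); split.
- apply: bounded_seq_pair (bounded_seq_snd fB).
  by exists 0 => k; rewrite normr0.
- exact: outer_limit_BL fB olF.
- apply: tracking_cond_pair; last exact: tr_fast.
  exact: (tracking_cond_slow
    (u := fun k => (Phi (k, jbar E k.-1)).1 - (Phi (k.-1, jbar E k.-1)).1)
    hA (bounded_seq_fst fB) tr_slow).
Qed.
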